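(* Let $p$ be an odd prime, $q=p^m$, $q=et+1$ with integers $e\geq 2,t\geq 1$, $R_{e,q}=\mathbb{F}_q[u]/\langle u^e-1\rangle$, and let $\varphi:R_{e,q}^n\to\mathbb{F}_q^{en}$ be the Gray map defined by a matrix $M\in GL_e(\mathbb{F}_q)$ with $MM^T=\gamma I_e$, $\gamma\in\mathbb{F}_q^*$ (see context). For every linear code $\mathcal{C}$ of length $n$ over $R_{e,q}$, $\varphi(\mathcal{C}\cap\mathcal{C}^\perp)=\varphi(\mathcal{C})\cap\varphi(\mathcal{C})^\perp$.
   Context: Write $u^e-1=\prod_{i=1}^e(u-\alpha_i)$ over $\mathbb{F}_q$, $G_i=u-\alpha_i$, $\widehat{G}_i=(u^e-1)/G_i$, $z_iG_i+h_i\widehat{G}_i=1$, $\mu_i=h_i\widehat{G}_i$; these are pairwise orthogonal idempotents summing to $1$, and each $r\in R_{e,q}$ is uniquely $r=\sum_i s_i\mu_i$, $s_i\in\mathbb{F}_q$. The Gray map is $\varphi(r_0,\dots,r_{n-1})=(\boldsymbol{r_0}M,\dots,\boldsymbol{r_{n-1}}M)$ with $\boldsymbol{r_j}=(s_{j,1},\dots,s_{j,e})$ for $r_j=\sum_i s_{j,i}\mu_i$. Duals are Euclidean (over $R_{e,q}$ and over $\mathbb{F}_q$). *)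

From HB Require Import structures.
From mathcomp Require Import all_boot all_order all_algebra.
Set Implicit Arguments. Unset Strict Implicit. Unset Printing Implicit Defensive.
Import GRing.Theory.
Local Open Scope ring_scope.

Definition Req (F : fieldType) (e : nat) := {poly %/ ('X^e - 1 : {poly F})}.

Definition Gpol (F : fieldType) (e : nat) (alpha : 'I_e -> F) (i : 'I_e) : {poly F} :=
  'X - (alpha i)%:P.
Definition Ghat (F : fieldType) (e : nat) (alpha : 'I_e -> F) (i : 'I_e) : {poly F} :=
  ('X^e - 1) %/ Gpol alpha i.

Definition mu (F : fieldType) (e : nat) (alpha : 'I_e -> F) (h : 'I_e -> {poly F})
  (i : 'I_e) : Req F e := in_qpoly ('X^e - 1) (h i * Ghat alpha i).

Definition linear_code (F : fieldType) (e n : nat) (C : 'rV[Req F e]_n -> Prop) :=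
  C 0 /\ (forall x y, C x -> C y -> C (x + y)) /\
  (forall (r : Req F e) x, C x -> C (r *: x)).

Definition eucl (R : comNzRingType) (n : nat) (x y : 'rV[R]_n) : R :=
  \sum_(j < n) x 0 j * y 0 j.
Definition dual (R : comNzRingType) (n : nat) (C : 'rV[R]_n -> Prop) : 'rV[R]_n -> Prop :=
  fun x => forall y, C y -> eucl x y = 0.
Definition setI_pred (T : Type) (A B : T -> Prop) : T -> Prop := fun x => A x /\ B x.

(* Gray map: phi(r_0,...,r_{n-1}) = (r_0 M, ..., r_{n-1} M) where r_j = sum_i s_{j,i} mu_i
   and bold r_j = (s_{j,1},...,s_{j,e}).  Row j of S is bold r_j; the image is the
   concatenation of the rows of S *m M (mxvec, row-major: block j = positions j*e..j*e+e-1).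
   Since the decomposition r = sum_i s_i mu_i is unique, this relation is the graph of phi. *)
Definition gray_rel (F : fieldType) (e n : nat) (alpha : 'I_e -> F)
  (h : 'I_e -> {poly F}) (M : 'M[F]_e) (c : 'rV[Req F e]_n) (w : 'rV[F]_(n * e)) : Prop :=
  exists S : 'M[F]_(n, e),
    (forall j : 'I_n, c 0 j = \sum_(i < e) S j i *: mu alpha h i) /\
    w = mxvec (S *m M).

Definition gray_image (F : fieldType) (e n : nat) (alpha : 'I_e -> F)
  (h : 'I_e -> {poly F}) (M : 'M[F]_e) (C : 'rV[Req F e]_n -> Prop) : 'rV[F]_(n * e) -> Prop :=
  fun w => exists c, C c /\ gray_rel alpha h M c w.

From HB Require Import structures.
From mathcomp Require Import all_boot all_order all_algebra.
From mathcomp Require Import ring.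
Set Implicit Arguments. Unset Strict Implicit. Unset Printing Implicit Defensive.
Import GRing.Theory Pdiv.CommonRing Pdiv.RingMonic.
Local Open Scope ring_scope.

(* Evaluation at the root alpha_k of u^e - 1 is an algebra morphism ev_k : R_{e,q} -> F_q
   with ev_k(mu_i) = [i = k]; hence ev_k reads off the k-th Gray coordinate s_k of
   r = sum_i s_i mu_i, and such an r vanishes once all its evaluations do.  Since
   M M^T = gamma I, the Gray map scales inner products:
   <phi(c), phi(c')> = gamma * sum_k ev_k <c, c'>.  This gives phi(C cap C^perp) within
   phi(C) cap phi(C)^perp at once.  Conversely, if phi(c) is orthogonal to phi(C), testing
   against phi(mu_k c') (with mu_k c' in C) gives gamma * ev_k <c, c'> = 0 for every k,
   so <c, c'> = 0. *)

Section QpolyEval.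
Variables (R : comNzRingType) (d : {poly R}) (x : R).

Definition qpoly_eval (r : {poly %/ d}) : R := (r : {poly R}).[x].

Fact qpoly_eval_is_linear : linear_for *%R qpoly_eval.
Proof. by move=> a r s; rewrite /qpoly_eval poly_of_qpolyD poly_of_qpolyZ hornerD hornerZ. Qed.

HB.instance Definition _ :=
  GRing.isLinear.Build R {poly %/ d} R *%R qpoly_eval qpoly_eval_is_linear.

Hypotheses (d_monic : d \is monic) (d_gt1 : (1 < size d)%N) (dx : root d x).

Lemma mk_monic_id : mk_monic d = d.
Proof. by rewrite /mk_monic d_gt1 d_monic. Qed.

Lemma horner_rmodp_root p : (rmodp p (mk_monic d)).[x] = p.[x].
Proof.
by rewrite mk_monic_id [in RHS](rdivp_eq d_monic p) hornerD hornerM (rootP dx) mulr0 add0r.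
Qed.

Lemma qpoly_eval_in_qpoly p : qpoly_eval (in_qpoly d p) = p.[x].
Proof. exact: horner_rmodp_root. Qed.

Lemma qpoly_evalM r s : qpoly_eval (r * s) = qpoly_eval r * qpoly_eval s.
Proof. by rewrite /qpoly_eval poly_of_qpolyM horner_rmodp_root hornerM. Qed.

End QpolyEval.

Lemma eucl_mxvec (R : comNzRingType) m n (A B : 'M[R]_(m, n)) :
  eucl (mxvec A) (mxvec B) = \tr (A *m B^T).
Proof.
rewrite /eucl /mxtrace (reindex (uncurry (@mxvec_index m n))) /=; last first.
  exact: curry_mxvec_bij.
under [RHS]eq_bigr => i _ do rewrite mxE.
by rewrite pair_bigA /=; apply: eq_bigr => -[i j] _ /=; rewrite !mxvecE mxE.
Qed.

Lemma eucl_mxvec_mulmx_orthogonal (R : comNzRingType) m n (A B : 'M[R]_(m, n))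
    (M : 'M[R]_n) gamma :
  M *m M^T = gamma%:M ->
  eucl (mxvec (A *m M)) (mxvec (B *m M)) = gamma * eucl (mxvec A) (mxvec B).
Proof.
move=> MMt; rewrite !eucl_mxvec trmx_mul mulmxA -(mulmxA A) MMt mul_mx_scalar.
by rewrite -scalemxAl mxtraceZ.
Qed.

Lemma euclZr (R : comNzRingType) n (r : R) (x y : 'rV[R]_n) :
  eucl x (r *: y) = r * eucl x y.
Proof. by rewrite /eucl mulr_sumr; apply: eq_bigr => j _; rewrite mxE; ring. Qed.

Section GrayMap.
Variables (F : fieldType) (e n : nat) (alpha : 'I_e -> F) (z h : 'I_e -> {poly F}).
Hypothesis e_gt0 : (0 < e)%N.
Hypothesis Xn_sub1_split : ('X^e - 1 : {poly F}) = \prod_(i < e) ('X - (alpha i)%:P).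
Hypothesis bezout : forall i, z i * Gpol alpha i + h i * Ghat alpha i = 1.

Local Notation mu := (mu alpha h).
Local Notation ev k := (@qpoly_eval F _ (alpha k) : Req F e -> F).

Lemma Xn_sub1_monic : ('X^e - 1 : {poly F}) \is monic.
Proof. by rewrite -(polyC1 F) monicXnsubC. Qed.

Lemma size_Xn_sub1_gt1 : (1 < size ('X^e - 1 : {poly F})%R)%N.
Proof. by rewrite -(polyC1 F) size_XnsubC // ltnS. Qed.

Lemma root_Xn_sub1 k : root ('X^e - 1) (alpha k).
Proof. by rewrite Xn_sub1_split /root horner_prod (bigD1 k) //= hornerXsubC subrr mul0r. Qed.

Lemma evM k (r s : Req F e) : ev k (r * s) = ev k r * ev k s.
Proof. exact: (qpoly_evalM Xn_sub1_monic size_Xn_sub1_gt1 (root_Xn_sub1 k)). Qed.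

Lemma Ghat_prod i : Ghat alpha i = \prod_(l | l != i) ('X - (alpha l)%:P).
Proof. by rewrite /Ghat /Gpol Xn_sub1_split (bigD1 i) //= mulKp // polyXsubC_eq0. Qed.

Lemma ev_mu i k : ev k (mu i) = (i == k)%:R.
Proof.
rewrite qpoly_eval_in_qpoly ?Xn_sub1_monic ?size_Xn_sub1_gt1 ?root_Xn_sub1 // hornerM.
case: eqP => [<- | /eqP ne_ik].
  have := congr1 (horner^~ (alpha i)) (bezout i).
  by rewrite /= hornerD !hornerM /Gpol hornerXsubC subrr mulr0 add0r hornerC.
rewrite Ghat_prod horner_prod (bigD1 k) 1?eq_sym //=.
by rewrite hornerXsubC subrr mul0r mulr0.
Qed.

Lemma ev_mu_comb (s : 'I_e -> F) k : ev k (\sum_i s i *: mu i) = s k.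
Proof.
rewrite linear_sum (bigD1 k) //= big1 => [|i ne_ik]; rewrite linearZ /= ev_mu.
  by rewrite eqxx mulr1 addr0.
by rewrite (negbTE ne_ik) mulr0.
Qed.

(* r - ev_k r is divisible by u - alpha_k, which mu_k annihilates since Ghat_k (u - alpha_k) = u^e - 1. *)
Lemma mu_mulr k (r : Req F e) : mu k * r = ev k r *: mu k.
Proof.
apply: val_inj; rewrite /= /qpoly_eval; move: (r : {poly F}) => p.
rewrite mk_monic_id ?Xn_sub1_monic ?size_Xn_sub1_gt1 // rmodp_mulml ?Xn_sub1_monic //.
have /factor_theorem [q p_eq] : root (p - (p.[alpha k])%:P) (alpha k).
  by rewrite /root hornerD hornerN hornerC subrr.
have Ghat_mul : Ghat alpha k * ('X - (alpha k)%:P) = 'X^e - 1.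
  by rewrite Xn_sub1_split (bigD1 k) //= mulrC Ghat_prod.
rewrite -[p in LHS](subrK (p.[alpha k])%:P) p_eq mulrDr.
have -> : h k * Ghat alpha k * (q * ('X - (alpha k)%:P)) = h k * q * ('X^e - 1).
  by rewrite -Ghat_mul; ring.
rewrite [_ * _%:P]mulrC mul_polyC.
by rewrite rmodpD ?(rmodp_mull Xn_sub1_monic) ?add0r ?rmodpZ // Xn_sub1_monic.
Qed.

Lemma eucl_eq0_ev (S : 'M[F]_(n, e)) (c c' : 'rV[Req F e]_n) :
  (forall j, c 0 j = \sum_i S j i *: mu i) ->
  (forall k, ev k (eucl c c') = 0) -> eucl c c' = 0.
Proof.
move=> c_eq ev_eq0.
have -> : eucl c c' = \sum_i (\sum_j S j i * ev i (c' 0 j)) *: mu i.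
  under [RHS]eq_bigr => i _ do rewrite scaler_suml.
  rewrite /eucl [RHS]exchange_big; apply: eq_bigr => j _ /=.
  rewrite c_eq mulr_suml; apply: eq_bigr => i _.
  by rewrite -scalerAl mu_mulr scalerA.
rewrite big1 // => k _.
have <- : ev k (eucl c c') = \sum_j S j k * ev k (c' 0 j).
  by rewrite linear_sum; apply: eq_bigr => j _ /=; rewrite evM c_eq ev_mu_comb.
by rewrite ev_eq0 scale0r.
Qed.

Variables (M : 'M[F]_e) (gamma : F).
Hypothesis MMt : M *m M^T = gamma%:M.
Local Notation gray := (gray_rel alpha h M).

Lemma eucl_gray_rel (c c' : 'rV[Req F e]_n) w w' :
  gray c w -> gray c' w' -> eucl w w' = gamma * \sum_k ev k (eucl c c').
Proof.
move=> [S [c_eq ->]] [S' [c'_eq ->]].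
rewrite (eucl_mxvec_mulmx_orthogonal _ _ MMt) eucl_mxvec; congr (_ * _).
rewrite /mxtrace; under eq_bigr => j _ do rewrite mxE.
rewrite exchange_big; apply: eq_bigr => k _ /=; rewrite linear_sum.
by apply: eq_bigr => j _ /=; rewrite evM c_eq c'_eq !ev_mu_comb mxE.
Qed.

Lemma gray_rel_mu_scale k (c' : 'rV[Req F e]_n) :
  gray (mu k *: c') (mxvec (\matrix_(j, i) ((i == k)%:R * ev k (c' 0 j)) *m M)).
Proof.
exists (\matrix_(j, i) ((i == k)%:R * ev k (c' 0 j))); split => // j.
rewrite mxE mu_mulr (bigD1 k) //= big1 => [|i ne_ik]; rewrite mxE.
  by rewrite eqxx mul1r addr0.
by rewrite (negbTE ne_ik) mul0r scale0r.
Qed.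

Lemma eucl_gray_mu_scale k (c c' : 'rV[Req F e]_n) w w' :
  gray c w -> gray (mu k *: c') w' -> eucl w w' = gamma * ev k (eucl c c').
Proof.
move=> wc wc'; rewrite (eucl_gray_rel wc wc') euclZr; congr (_ * _).
under eq_bigr => l _ do rewrite evM ev_mu.
rewrite (bigD1 k) //= eqxx mul1r big1 ?addr0 // => l ne_lk.
by rewrite eq_sym (negbTE ne_lk) mul0r.
Qed.

End GrayMap.

Theorem lemma4p7 (F : finFieldType) (p m e t n : nat)
  (hp : prime p) (hpodd : odd p) (hq : #|F| = (p ^ m)%N)
  (het : #|F| = (e * t + 1)%N) (he : (2 <= e)%N) (ht : (1 <= t)%N)
  (alpha : 'I_e -> F)
  (halpha : ('X^e - 1 : {poly F}) = \prod_(i < e) ('X - (alpha i)%:P))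
  (z h : 'I_e -> {poly F})
  (hzh : forall i, z i * Gpol alpha i + h i * Ghat alpha i = 1)
  (M : 'M[F]_e) (hM : M \in unitmx) (gamma : F) (hgamma : gamma != 0)
  (hMM : M *m M^T = gamma%:M)
  (C : 'rV[Req F e]_n -> Prop) (hC : linear_code C) :
  forall w : 'rV[F]_(n * e),
    gray_image alpha h M (setI_pred C (dual C)) w <->
    setI_pred (gray_image alpha h M C) (dual (gray_image alpha h M C)) w.
Proof.
have e_gt0 : (0 < e)%N := ltnW he.
move=> w; split.
  move=> [c [[Cc c_perp] wc]]; split; first by exists c.
  move=> y [c' [Cc' wc']].
  rewrite (eucl_gray_rel e_gt0 halpha hzh hMM wc wc') c_perp //.
  by rewrite big1 ?mulr0 // => k _; rewrite linear0.
move=> [[c [Cc wc]] w_perp]; exists c; split => //; split => // c' Cc'.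
have [S [c_eq _]] := wc.
apply: (eucl_eq0_ev e_gt0 halpha hzh c_eq) => k.
have wk := gray_rel_mu_scale h e_gt0 halpha M k c'.
have Cmuc' : C (mu alpha h k *: c') := hC.2.2 _ _ Cc'.
have := w_perp _ (ex_intro _ _ (conj Cmuc' wk)).
rewrite (eucl_gray_mu_scale e_gt0 halpha hzh hMM wc wk) => /eqP.
by rewrite mulf_eq0 (negbTE hgamma) => /eqP.
Qed.
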